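(* Let $\mathcal{L}=\mathfrak{sl}_n\dot+\mathcal{I}$ be as in the context and let $\Delta:\mathcal{L}\to\mathcal{L}$ be a linear map such that $\Delta_{\mathfrak{sl}_n}(x)=-x$ for all $x\in\mathfrak{sl}_n$. Then $\Delta$ is not a local automorphism of $\mathcal{L}$.
   Context: $\mathcal{L}=\mathfrak{sl}_n\oplus\mathcal{I}$ is a simple complex Leibniz algebra: $\mathfrak{sl}_n$ is the Lie algebra of trace-zero complex $n\times n$ matrices ($n\ge2$), $\mathcal{I}$ is a nonzero irreducible finite-dimensional right $\mathfrak{sl}_n$-module with nontrivial action $v\mapsto[v,g]$, and the bracket is $[(g_1,v_1),(g_2,v_2)]=([g_1,g_2],[v_1,g_2])$. An automorphism of $\mathcal{L}$ is an invertible linear map preserving the bracket; a linear map $\Delta$ is a local automorphism if for each $x\in\mathcal{L}$ there is an automorphism $\Phi_x$ with $\Phi_x(x)=\Delta(x)$. For a linear map $\Delta$ of $\mathcal{L}$, $\Delta_{\mathfrak{sl}_n}=p\circ\Delta|_{\mathfrak{sl}_n}$, where $p$ is the projection onto $\mathfrak{sl}_n$ along $\mathcal{I}$. *)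

From HB Require Import structures.
From mathcomp Require Import all_boot all_order all_algebra.
Set Implicit Arguments. Unset Strict Implicit. Unset Printing Implicit Defensive.
Import GRing.Theory.
Local Open Scope ring_scope.

(* Elements of L = sl_n (+) I are represented as pairs (g, v) with
   g : 'M[F]_n of trace zero and v : 'rV[F]_m (I ~ F^m, acting on the right
   via v |-> v *m rho g, i.e. [v, g] := v *m rho g). *)

Definition sl (F : fieldType) (n : nat) (g : 'M[F]_n) : Prop := \tr g = 0.

Definition inL (F : fieldType) (n m : nat) (x : 'M[F]_n * 'rV[F]_m) : Prop :=
  sl x.1.

Definition right_sl_module (F : fieldType) (n m : nat)
    (rho : 'M[F]_n -> 'M[F]_m) : Prop :=
  (forall (a : F) g h, sl g -> sl h -> rho (a *: g + h) = a *: rho g + rho h) /\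
  (forall g1 g2, sl g1 -> sl g2 ->
     rho (g1 *m g2 - g2 *m g1) = rho g1 *m rho g2 - rho g2 *m rho g1).

Definition irreducible_module (F : fieldType) (n m : nat)
    (rho : 'M[F]_n -> 'M[F]_m) : Prop :=
  (0 < m)%N /\
  forall U : 'M[F]_m, (forall g, sl g -> (U *m rho g <= U)%MS) ->
    U = 0 \/ row_full U.

Definition nontrivial_action (F : fieldType) (n m : nat)
    (rho : 'M[F]_n -> 'M[F]_m) : Prop :=
  exists g, sl g /\ rho g <> 0.

(* Leibniz bracket [(g1,v1),(g2,v2)] = ([g1,g2], [v1,g2]). *)
Definition lbracket (F : fieldType) (n m : nat) (rho : 'M[F]_n -> 'M[F]_m)
    (x y : 'M[F]_n * 'rV[F]_m) : 'M[F]_n * 'rV[F]_m :=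
  (x.1 *m y.1 - y.1 *m x.1, x.2 *m rho y.1).

Definition L_scale (F : fieldType) (n m : nat) (a : F)
    (x : 'M[F]_n * 'rV[F]_m) : 'M[F]_n * 'rV[F]_m := (a *: x.1, a *: x.2).
Definition L_add (F : fieldType) (n m : nat)
    (x y : 'M[F]_n * 'rV[F]_m) : 'M[F]_n * 'rV[F]_m := (x.1 + y.1, x.2 + y.2).

Definition L_linear (F : fieldType) (n m : nat)
    (f : 'M[F]_n * 'rV[F]_m -> 'M[F]_n * 'rV[F]_m) : Prop :=
  (forall x, inL x -> inL (f x)) /\
  (forall (a : F) x y, inL x -> inL y ->
     f (L_add (L_scale a x) y) = L_add (L_scale a (f x)) (f y)).

Definition L_automorphism (F : fieldType) (n m : nat) (rho : 'M[F]_n -> 'M[F]_m)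
    (f : 'M[F]_n * 'rV[F]_m -> 'M[F]_n * 'rV[F]_m) : Prop :=
  [/\ L_linear f,
      (forall x y, inL x -> inL y -> f x = f y -> x = y),
      (forall y, inL y -> exists2 x, inL x & f x = y) &
      (forall x y, inL x -> inL y -> f (lbracket rho x y) = lbracket rho (f x) (f y))].

Definition local_automorphism (F : fieldType) (n m : nat) (rho : 'M[F]_n -> 'M[F]_m)
    (D : 'M[F]_n * 'rV[F]_m -> 'M[F]_n * 'rV[F]_m) : Prop :=
  L_linear D /\
  forall x, inL x -> exists Phi, L_automorphism rho Phi /\ Phi x = D x.

From HB Require Import structures.
From mathcomp Require Import all_boot all_order all_algebra.
From mathcomp Require Import ring.
Set Implicit Arguments.
Unset Strict Implicit.
Unset Printing Implicit Defensive.
Import GRing.Theory.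
Local Open Scope ring_scope.

(* Write Delta (g, v) = (- g, d g + v M).  Automorphisms map the ideal I into
   itself, so M is injective; comparing Phi [x, x] and Phi [[x, x], x], where
   Phi is an automorphism with Phi x = Delta x for x = (g, v), shows that M
   stabilises the kernel of rho g and maps the kernel of rho g (rho g + c) into
   that of rho g (rho g - c).  Take the sl_2-triple X = rho E_ij, Y = rho E_ji,
   H = rho (E_ii - E_jj) with X <> 0, and a nonzero vector w of H-weight
   mu <> 0 killed by X (or, symmetrically, by Y).  Then w M H is killed by X
   and has weight - mu; the weights of vectors killed by X are nonpositive
   integers, so w M H = 0, and injectivity of M on the kernel of H gives
   w H = 0, contradicting mu <> 0. *)

Lemma pchar0_natr_inj (F : fieldType) :
  [pchar F] =i pred0 -> injective (fun k : nat => k%:R : F).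
Proof.
move=> /(pcharf0P F) natr_eq0 i j; wlog le_ij : i j / (i <= j)%N.
  by move=> W; case: (leqP i j) => [/W //| /ltnW le_ji /esym/W ->].
move=> /= e; apply/eqP; rewrite eqn_leq le_ij /= -subn_eq0 -natr_eq0.
by rewrite natrB // e subrr.
Qed.

Section LinearAlgebra.
Variable F : fieldType.

(* An injective endomorphism that stabilises the finite-dimensional kernel
   of [B] maps it onto itself, so it cannot move a vector into it. *)
Lemma free_stable_kernel m p (M : 'M[F]_m) (B : 'M[F]_(m, p)) :
  (forall v : 'rV_m, v *m M = 0 -> v = 0) ->
  (forall v : 'rV_m, v *m B = 0 -> v *m M *m B = 0) ->
  forall v : 'rV_m, v *m M *m B = 0 -> v *m B = 0.
Proof.
move=> Minj MB v vMB; set K := kermx B.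
have sKM : (K *m M <= K)%MS.
  apply/sub_kermxP/row_matrixP => i; rewrite row_mul (row_mul i K M) row0.
  by apply: MB; apply/sub_kermxP; exact: row_sub.
have sK : (K <= K *m M)%MS.
  by rewrite -(mxrank_leqif_sup sKM) mxrankMfree //; exact: inj_row_free.
have /submxP[x vM] : (v *m M <= K *m M)%MS by apply: submx_trans sK; apply/sub_kermxP.
have /Minj /eqP : (v - x *m K) *m M = 0 by rewrite mulmxBl vM mulmxA subrr.
by rewrite subr_eq0 => /eqP ->; rewrite -mulmxA mulmx_ker mulmx0.
Qed.

Lemma linear_row_map_mx m (f : 'rV[F]_m -> 'rV[F]_m) :
  (forall (a : F) u v, f (a *: u + v) = a *: f u + f v) ->
  forall v, v *m lin1_mx f = f v.
Proof.
move=> f_lin; have f0 : f 0 = 0.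
  have := f_lin 1 0 0; rewrite !scale1r !addr0 => /esym/eqP.
  by rewrite -subr_eq0 addrK => /eqP.
have fZ a u : f (a *: u) = a *: f u by rewrite -[a *: u]addr0 f_lin f0 addr0.
have fD u v : f (u + v) = f u + f v by have := f_lin 1 u v; rewrite !scale1r.
have f_sum (s : seq 'I_m) (G : 'I_m -> 'rV_m) :
    f (\sum_(j <- s) G j) = \sum_(j <- s) f (G j).
  by elim: s => [|j s IH]; rewrite ?big_nil ?f0 // !big_cons fD IH.
move=> v; rewrite {2}(row_sum_delta v) f_sum {1}(row_sum_delta v) mulmx_suml.
apply: eq_bigr => j _; rewrite -scalemxAl fZ; congr (_ *: _).
by rewrite -rowE; apply/rowP => k; rewrite !mxE.
Qed.

Lemma stable_eigenvector (C : closedFieldType) m (A H : 'M[C]_m) :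
  A != 0 -> (A *m H <= A)%MS ->
  exists w : 'rV_m, exists nu : C, [/\ w != 0, (w <= A)%MS & w *m H = nu *: w].
Proof.
move=> A0 sAH; set V := row_base A.
have fV : row_free V := row_base_free A.
have sVH : (V *m H <= V)%MS by rewrite stablemx_row_base.
have [nu] : exists nu, root (char_poly (V *m H *m pinvmx V)) nu.
  by apply/closed_rootP; rewrite size_char_poly eqSS mxrank_eq0.
rewrite -eigenvalue_root_char => /eigenvalueP[u uC u0].
exists (u *m V), nu; split.
- by apply: contra u0 => /eqP uV0; apply/eqP/(row_free_inj fV); rewrite uV0 mul0mx.
- by rewrite -(eq_row_base A) submxMl.
- by rewrite -mulmxA -(mulmxKpV sVH) mulmxA uC -scalemxAl.
Qed.

End LinearAlgebra.

Section Sl2Triple.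
Variables (F : fieldType) (m : nat).
Hypothesis pchar0F : [pchar F] =i pred0.
Implicit Types (X Y H Z M : 'M[F]_m) (u v w : 'rV[F]_m) (mu nu : F).

Definition sl2_triple X Y H := [/\ H *m X - X *m H = 2%:R *: X,
  H *m Y - Y *m H = - (2%:R *: Y) & X *m Y - Y *m X = H].

Lemma sl2_triple_swap X Y H : sl2_triple X Y H -> sl2_triple Y X (- H).
Proof.
case=> HX HY XY; split.
- by rewrite mulNmx mulmxN opprK addrC -opprB HY opprK.
- by rewrite mulNmx mulmxN opprK addrC -opprB HX.
- by rewrite -XY opprB.
Qed.

Lemma natr2_neq0 : 2%:R != 0 :> F.
Proof. by rewrite ((pcharf0P F).1 pchar0F). Qed.

Lemma eigen_shift Z H s mu v : Z *m H = H *m Z + s *: Z -> v *m H = mu *: v ->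
  forall k : nat, v *m Z ^+ k *m H = (mu + k%:R * s) *: (v *m Z ^+ k).
Proof.
move=> ZH vH; elim=> [|k IH]; first by rewrite expr0 mulmx1 vH mul0r addr0.
rewrite exprSr -mulmxE mulmxA -mulmxA ZH mulmxDr mulmxA IH -scalemxAl.
by rewrite -scalemxAr -mulmxA -scalerDl mulrSr mulrDl mul1r addrA.
Qed.

(* The shifted vectors are eigenvectors for the pairwise distinct eigenvalues
   [mu + k s], so only finitely many of them can be nonzero. *)
Lemma shift_chain_end Z H s mu v : s != 0 -> Z *m H = H *m Z + s *: Z ->
  v *m H = mu *: v -> v != 0 ->
  exists j : nat, v *m Z ^+ j != 0 /\ v *m Z ^+ j.+1 = 0.
Proof.
move=> s0 ZH vH v0.
have exN : exists N, v *m Z ^+ N == 0.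
  have [/existsP[k] | ] := boolP [exists k : 'I_m.+1, v *m Z ^+ k == 0].
    by exists k.
  rewrite negb_exists => /forallP vZ_neq0; exfalso.
  have cp0 : char_poly H != 0 by rewrite -size_poly_eq0 size_char_poly.
  have := max_poly_roots cp0 (rs := [seq mu + k%:R * s | k <- iota 0 m.+1]).
  rewrite size_map size_iota size_char_poly ltnn => bound.
  suff : false by []; apply: bound.
  - apply/allP => x /mapP[k]; rewrite mem_iota add0n => lt_km ->.
    rewrite -eigenvalue_root_char; apply/eigenvalueP.
    by exists (v *m Z ^+ k); [exact: eigen_shift | exact: (vZ_neq0 (Ordinal lt_km))].
  - rewrite map_inj_in_uniq ?iota_uniq // => a b _ _ /addrI /(mulIf s0).
    exact: pchar0_natr_inj.
case: (ex_minnP exN) => -[|j]; first by rewrite expr0 mulmx1 (negbTE v0).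
move=> /eqP vZj0 min_j; exists j; split=> //.
by apply/negP => /min_j; rewrite ltnn.
Qed.

(* Acting on the right, [Y] raises and [X] lowers weights by 2, so a vector
   killed by [X] is a lowest weight vector, whose weight is [- k] where [k + 1]
   is the length of its [Y]-string. *)
Lemma lowest_weight_opp_nat X Y H u nu : sl2_triple X Y H ->
  u != 0 -> u *m X = 0 -> u *m H = nu *: u -> exists k : nat, nu = - k%:R.
Proof.
case=> _ HY XY u0 uX uH.
have YH : Y *m H = H *m Y + 2%:R *: Y by rewrite -[2%:R *: Y]opprK -HY opprB addrC subrK.
have YX : Y *m X = X *m Y - H by rewrite -XY opprB addrC subrK.
have uYX k : u *m Y ^+ k.+1 *m X = - (k.+1%:R * (nu + k%:R)) *: (u *m Y ^+ k).
  elim: k => [|k IH].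
    rewrite expr1 expr0 mulmx1 -mulmxA YX mulmxBr mulmxA uX mul0mx sub0r uH.
    by rewrite addr0 mul1r scaleNr.
  rewrite exprSr -mulmxE mulmxA -mulmxA YX mulmxBr mulmxA IH -scalemxAl.
  rewrite -mulmxA mulmxE -exprSr (eigen_shift YH uH) -scalerBl.
  by congr (_ *: _); rewrite !mulrSr; ring.
have [j [uYj0 uYj1]] := shift_chain_end natr2_neq0 YH uH u0.
exists j; apply/eqP; rewrite -addr_eq0.
have /eqP := uYX j; rewrite uYj1 mul0mx eq_sym scaler_eq0 (negbTE uYj0) orbF.
by rewrite oppr_eq0 mulf_eq0 ((pcharf0P F).1 pchar0F).
Qed.

Definition kernel_stable M X := forall v, v *m X = 0 -> v *m M *m X = 0.

Definition weight_reversing M H := forall v c,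
  v *m (H *m H + c *: H) = 0 -> v *m M *m (H *m H - c *: H) = 0.

Lemma kernel_stableN M X : kernel_stable M X -> kernel_stable M (- X).
Proof.
by move=> MX v; rewrite !mulmxN => /eqP; rewrite oppr_eq0 => /eqP/MX ->; rewrite oppr0.
Qed.

Lemma weight_reversingN M H : weight_reversing M H -> weight_reversing M (- H).
Proof.
by move=> MH v c; have := MH v (- c); rewrite mulNmx mulmxN opprK !scalerN !scaleNr.
Qed.

(* [w M H] is again killed by [X], now of weight [- mu]; as the weights
   [mu] and [- mu] cannot both be nonpositive integers unless [mu = 0], it
   vanishes, and then so does [w H] because [M] is injective on [kermx H]. *)
Lemma weight_reversing_lowest_weight0 X Y H M w mu : sl2_triple X Y H ->
  (forall v, v *m M = 0 -> v = 0) -> kernel_stable M X -> kernel_stable M H ->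
  weight_reversing M H -> w != 0 -> w *m X = 0 -> w *m H = mu *: w -> mu = 0.
Proof.
move=> sl2XYH Minj MX MH revM w0 wX wH; case: (sl2XYH) => HX _ _.
set u := w *m M *m H.
have wMX := MX _ wX.
have uX : u *m X = 0.
  have HXE : H *m X = X *m H + 2%:R *: X by rewrite -HX addrC subrK.
  by rewrite -mulmxA HXE mulmxDr mulmxA wMX mul0mx -scalemxAr wMX scaler0 addr0.
have uH : u *m H = - mu *: u.
  have : w *m (H *m H + (- mu) *: H) = 0.
    rewrite mulmxDr mulmxA wH -scalemxAl wH -scalemxAr wH.
    by rewrite !scalerA mulNr scaleNr subrr.
  move/revM; rewrite scaleNr opprK mulmxDr mulmxA -scalemxAr -/u => /eqP.
  by rewrite addr_eq0 => /eqP ->; rewrite scaleNr.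
have [u0|u_neq0] := eqVneq u 0.
  have /eqP := free_stable_kernel Minj MH u0.
  by rewrite wH scaler_eq0 (negbTE w0) orbF => /eqP.
have [k1 k1E] := lowest_weight_opp_nat sl2XYH u_neq0 uX uH.
have [k2 k2E] := lowest_weight_opp_nat sl2XYH w0 wX wH.
have : (k1 + k2)%:R = 0%:R :> F.
  by rewrite natrD -[k1%:R]opprK -k1E k2E !opprK addNr.
move/(pchar0_natr_inj pchar0F)/eqP; rewrite addn_eq0 => /andP[_ /eqP k2_0].
by rewrite k2E k2_0 oppr0.
Qed.

End Sl2Triple.

Section Sl2TripleClosed.
Variables (C : closedFieldType) (m : nat).
Hypothesis pchar0C : [pchar C] =i pred0.
Implicit Types (X Y H M : 'M[C]_m) (u v w : 'rV[C]_m).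

(* The row space of [X] is [H]-stable.  An eigenvector [v X] of [H] there of
   weight 0 would satisfy [v (H - 2) X = 0]; if 2 is not a weight, [H - 2] is
   injective and stabilises [kermx X], forcing [v X = 0]. *)
Lemma exists_nonzero_weight X Y H : sl2_triple X Y H -> X != 0 ->
  exists v : 'rV_m, exists mu : C, [/\ v != 0, mu != 0 & v *m H = mu *: v].
Proof.
case=> HX _ _ X0.
have HX2 : (H - 2%:R%:M) *m X = X *m H.
  by rewrite mulmxBl mul_scalar_mx -HX opprB addrC subrK.
have sXH : (X *m H <= X)%MS by rewrite -HX2 submxMl.
have [w [nu [vX0 /submxP[v wE] wH]]] := stable_eigenvector X0 sXH; subst w.
have [nu0|nu_neq0] := eqVneq nu 0; last by exists (v *m X), nu; split.
have [/eigenvalueP[u uH u0] | not2] := boolP (eigenvalue H 2%:R).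
  by exists u, 2%:R; split; rewrite ?natr2_neq0.
have H2inj u : u *m (H - 2%:R%:M) = 0 -> u = 0.
  rewrite mulmxBr mul_mx_scalar => /eqP; rewrite subr_eq0 => /eqP uH.
  by apply/eqP; apply: contraNT not2 => u0; apply/eigenvalueP; exists u.
have H2X : kernel_stable (H - 2%:R%:M) X.
  by move=> u uX; rewrite -mulmxA HX2 mulmxA uX mul0mx.
move: vX0; rewrite (free_stable_kernel H2inj H2X (v := v)) ?eqxx //.
by rewrite -mulmxA HX2 mulmxA wH nu0 scale0r.
Qed.

(* Move [v] down its [X]-string or up its [Y]-string; the end weights
   [mu - 2 i] and [mu + 2 j] cannot both vanish since [mu != 0]. *)
Lemma exists_extremal_weight_vector X Y H : sl2_triple X Y H -> X != 0 ->
  exists w : 'rV_m, exists mu : C,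
    [/\ w != 0, mu != 0, w *m H = mu *: w & w *m X = 0 \/ w *m Y = 0].
Proof.
move=> sl2XYH X0; have [v [mu [v0 mu0 vH]]] := exists_nonzero_weight sl2XYH X0.
case: sl2XYH => HX HY _.
have XH : X *m H = H *m X + (- 2%:R) *: X by rewrite scaleNr -HX opprB addrC subrK.
have YH : Y *m H = H *m Y + 2%:R *: Y.
  by rewrite -[2%:R *: Y]opprK -HY opprB addrC subrK.
have two0 := natr2_neq0 pchar0C.
have mtwo0 : - 2%:R != 0 :> C by rewrite oppr_eq0.
have [i [vXi0 vXi1]] := shift_chain_end pchar0C mtwo0 XH vH v0.
have [j [vYj0 vYj1]] := shift_chain_end pchar0C two0 YH vH v0.
have [muX0|] := eqVneq (mu + i%:R * - 2%:R) 0; last first.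
  exists (v *m X ^+ i), (mu + i%:R * - 2%:R); split=> //; first exact: eigen_shift.
  by left; rewrite -mulmxA mulmxE -exprSr.
have [muY0|] := eqVneq (mu + j%:R * 2%:R) 0; last first.
  exists (v *m Y ^+ j), (mu + j%:R * 2%:R); split=> //; first exact: eigen_shift.
  by right; rewrite -mulmxA mulmxE -exprSr.
have : (i + j)%:R * 2%:R == 0 :> C.
  suff -> : (i + j)%:R * 2%:R = mu + j%:R * 2%:R - (mu + i%:R * - 2%:R) :> C.
    by rewrite muX0 muY0 subrr.
  by rewrite natrD; ring.
rewrite mulf_eq0 (negbTE two0) orbF ((pcharf0P C).1 pchar0C) addn_eq0.
by case/andP=> /eqP i0 _; move: muX0 mu0; rewrite i0 mul0r addr0 => ->; rewrite eqxx.
Qed.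

Lemma sl2_no_weight_reversing_operator X Y H M : sl2_triple X Y H -> X != 0 ->
  (forall v, v *m M = 0 -> v = 0) -> kernel_stable M X -> kernel_stable M Y ->
  kernel_stable M H -> weight_reversing M H -> False.
Proof.
move=> sl2XYH X0 Minj MX MY MH revM.
have [w [mu [w0 mu0 wH [wX|wY]]]] := exists_extremal_weight_vector sl2XYH X0.
  by move: mu0; rewrite (weight_reversing_lowest_weight0 pchar0C sl2XYH Minj MX MH revM
    w0 wX wH) eqxx.
have wNH : w *m - H = - mu *: w by rewrite mulmxN wH scaleNr.
move: mu0; rewrite -oppr_eq0 (weight_reversing_lowest_weight0 pchar0C
  (sl2_triple_swap sl2XYH) Minj MY (kernel_stableN MH) (weight_reversingN revM) w0 wY wNH).
by rewrite eqxx.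
Qed.

End Sl2TripleClosed.

Section SpecialLinear.
Variables (F : fieldType) (n : nat).
Implicit Types (g h A : 'M[F]_n) (i j k l : 'I_n).

Lemma sl0 : sl (0 : 'M[F]_n). Proof. exact: mxtrace0. Qed.

Lemma slZ a g : sl g -> sl (a *: g).
Proof. by rewrite /sl mxtraceZ => ->; rewrite mulr0. Qed.

Lemma mxtrace_delta i j : \tr (delta_mx i j : 'M[F]_n) = (i == j)%:R.
Proof.
rewrite /mxtrace (bigD1 i) //= big1 ?addr0 => [|k /negbTE ki]; rewrite mxE ?eqxx //.
by rewrite ki.
Qed.

Lemma sl_delta i j : i != j -> sl (delta_mx i j : 'M[F]_n).
Proof. by rewrite /sl mxtrace_delta => /negbTE ->. Qed.

Lemma sl_delta_diag i j : sl (delta_mx i i - delta_mx j j : 'M[F]_n).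
Proof. by rewrite /sl raddfB /= !mxtrace_delta !eqxx subrr. Qed.

Lemma sl_sum (I : Type) (s : seq I) (G : I -> 'M[F]_n) :
  (forall x, sl (G x)) -> sl (\sum_(x <- s) G x).
Proof. by move=> slG; rewrite /sl raddf_sum big1 // => x _; exact: slG. Qed.

Lemma sl_delta_sub i j o : sl (delta_mx i j - (i == j)%:R *: delta_mx o o : 'M[F]_n).
Proof. by rewrite /sl raddfB /= mxtraceZ !mxtrace_delta eqxx mulr1 subrr. Qed.

Lemma sl_sum_delta g o : sl g ->
  g = \sum_i \sum_j g i j *: (delta_mx i j - (i == j)%:R *: delta_mx o o).
Proof.
move=> trg; transitivity (\sum_i \sum_j g i j *: delta_mx i j - \sum_i g i i *: delta_mx o o).
  by rewrite -scaler_suml -/(mxtrace g) trg scale0r subr0 -matrix_sum_delta.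
rewrite -sumrB; apply: eq_bigr => i _.
under [RHS]eq_bigr => j _ do rewrite scalerBr scalerA.
rewrite sumrB; congr (_ - _).
rewrite (bigD1 i) //= eqxx mulr1 big1 ?addr0 // => j.
by rewrite eq_sym => /negbTE ->; rewrite mulr0 scale0r.
Qed.

Lemma mul_delta_mxE i j k l A : (delta_mx i j *m A) k l = (k == i)%:R * A j l.
Proof.
rewrite mxE (bigD1 j) //= big1 ?addr0 => [|r /negbTE rj]; rewrite mxE ?eqxx ?andbT //.
by rewrite rj andbF mul0r.
Qed.

Lemma mul_mx_deltaE i j k l A : (A *m delta_mx i j) k l = A k i * (l == j)%:R.
Proof.
rewrite mxE (bigD1 i) //= big1 ?addr0 => [|r /negbTE ri]; rewrite mxE ?eqxx //.
by rewrite ri mulr0.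
Qed.

(* Commuting with the off-diagonal matrix units forces a scalar matrix,
   and a traceless scalar matrix vanishes in characteristic 0. *)
Lemma sl_comm_delta_eq0 A : [pchar F] =i pred0 -> (2 <= n)%N -> sl A ->
  (forall i j, i != j -> delta_mx i j *m A = A *m delta_mx i j) -> A = 0.
Proof.
move=> pchar0F n_ge2 trA commA.
have offA k l : k != l -> A k l = 0.
  move=> kl; have := congr1 (fun B : 'M[F]_n => B k k) (commA l k _).
  by rewrite eq_sym kl mul_delta_mxE mul_mx_deltaE (negbTE kl) mul0r eqxx mulr1 => /(_ isT).
have o : 'I_n by case: n n_ge2 => // n' _; exact: ord0.
have diagA k : A k k = A o o.
  have [-> // | ko] := eqVneq k o.
  have := congr1 (fun B : 'M[F]_n => B k o) (commA k o ko).
  by rewrite mul_delta_mxE mul_mx_deltaE !eqxx mul1r mulr1.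
have Ao0 : A o o = 0.
  move: trA; rewrite /sl /mxtrace (eq_bigr _ (fun k _ => diagA k)) sumr_const card_ord.
  move/eqP; rewrite -mulr_natl mulf_eq0 ((pcharf0P F).1 pchar0F) => /orP[/eqP n0|/eqP //].
  by rewrite n0 in n_ge2.
apply/matrixP => k l; rewrite mxE.
by have [<-|kl] := eqVneq k l; [rewrite diagA | exact: offA].
Qed.

End SpecialLinear.

Section SlModule.
Variables (F : fieldType) (n m : nat) (rho : 'M[F]_n -> 'M[F]_m).
Hypothesis rho_mod : right_sl_module rho.
Implicit Types (g h : 'M[F]_n) (i j : 'I_n).

Lemma rho0 : rho 0 = 0.
Proof.
have := rho_mod.1 1 0 0 (sl0 _ _) (sl0 _ _); rewrite !scale1r addr0 => /esym/eqP.
by rewrite -subr_eq0 addrK => /eqP.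
Qed.

Lemma rhoZ a g : sl g -> rho (a *: g) = a *: rho g.
Proof. by move=> slg; have := rho_mod.1 a g 0 slg (sl0 _ _); rewrite !addr0 rho0 addr0. Qed.

Lemma rhoD g h : sl g -> sl h -> rho (g + h) = rho g + rho h.
Proof. by move=> slg slh; have := rho_mod.1 1 g h slg slh; rewrite !scale1r. Qed.

Lemma rhoN g : sl g -> rho (- g) = - rho g.
Proof. by move=> slg; rewrite -scaleN1r rhoZ // scaleN1r. Qed.

Lemma rho_sum (I : Type) (s : seq I) (G : I -> 'M[F]_n) :
  (forall x, sl (G x)) -> rho (\sum_(x <- s) G x) = \sum_(x <- s) rho (G x).
Proof.
move=> slG; elim: s => [|a s IH]; first by rewrite !big_nil rho0.
by rewrite !big_cons rhoD ?IH //; exact: sl_sum.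
Qed.

(* The off-diagonal matrix units and their commutators [E_ii - E_jj] span
   [sl n]. *)
Lemma exists_delta_nonzero : (2 <= n)%N -> nontrivial_action rho ->
  exists i j, i != j /\ rho (delta_mx i j) != 0.
Proof.
move=> n_ge2 [g [slg rhog]].
have [/existsP[i /existsP[j /andP[ij rij]]] | none] :=
  boolP [exists i, exists j, (i != j) && (rho (delta_mx i j) != 0)].
  by exists i, j.
have rho_off i j : i != j -> rho (delta_mx i j) = 0.
  move=> ij; apply/eqP; apply: contraNT none => rij.
  by apply/existsP; exists i; apply/existsP; exists j; rewrite ij.
have rho_diag i j : rho (delta_mx i i - delta_mx j j) = 0.
  have [<-|ij] := eqVneq i j; first by rewrite subrr rho0.
  have ji : j != i by rewrite eq_sym.
  rewrite -(mul_delta_mx (R := F) j i i) -(mul_delta_mx (R := F) i j j).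
  rewrite rho_mod.2 ?rho_off ?mul0mx ?subrr //; exact: sl_delta.
have o : 'I_n by case: n n_ge2 => // n' _; exact: ord0.
case: rhog; rewrite (sl_sum_delta o slg) rho_sum => [|i]; last first.
  by apply: sl_sum => j; apply/slZ/sl_delta_sub.
rewrite big1 // => i _; rewrite rho_sum => [|j]; last exact/slZ/sl_delta_sub.
rewrite big1 // => j _; rewrite rhoZ; last exact: sl_delta_sub.
have [<-|ij] := eqVneq i j; first by rewrite scale1r rho_diag scaler0.
by rewrite scale0r subr0 rho_off ?scaler0.
Qed.

Lemma sl2_triple_delta i j : i != j ->
  sl2_triple (rho (delta_mx i j)) (rho (delta_mx j i)) (rho (delta_mx i i - delta_mx j j)).
Proof.
move=> ij; have ji : j != i by rewrite eq_sym.
have slij := sl_delta F ij; have slji := sl_delta F ji.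
have slh := sl_delta_diag F i j.
split.
- rewrite -(rho_mod.2 _ _ slh slij) -rhoZ //; congr rho.
  rewrite mulmxBl mulmxBr !mul_delta_mx_cond !eqxx ?(negbTE ij) ?(negbTE ji).
  by rewrite mulr0n mulr1n subr0 sub0r opprK scaler_nat mulr2n.
- rewrite -(rho_mod.2 _ _ slh slji) -rhoZ // -rhoN; last exact: slZ.
  congr rho; rewrite mulmxBl mulmxBr !mul_delta_mx_cond !eqxx ?(negbTE ij) ?(negbTE ji).
  by rewrite mulr0n mulr1n subr0 sub0r scaler_nat mulr2n opprD.
- by rewrite -(rho_mod.2 _ _ slij slji) !mul_delta_mx.
Qed.

End SlModule.

Section Automorphism.
Variables (F : fieldType) (n m : nat) (rho : 'M[F]_n -> 'M[F]_m).
Variable P : 'M[F]_n * 'rV[F]_m -> 'M[F]_n * 'rV[F]_m.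
Hypotheses (rho_mod : right_sl_module rho) (autP : L_automorphism rho P).

Lemma aut_zero : P (0, 0) = (0, 0).
Proof.
case: autP => [[_ linP] _ _ _].
have := linP 1 (0, 0) (0, 0) (sl0 _ _) (sl0 _ _).
rewrite /L_add /L_scale /= !scale1r !addr0; case: (P (0, 0)) => a b [].
by rewrite -{1}[a]addr0 -{1}[b]addr0 => /addrI <- /addrI <-.
Qed.

(* [(0, u)] right-annihilates [L], so the [sl n] part of its image commutes
   with the whole [sl n] part of the image of [P], which is all of [sl n]. *)
Lemma aut_ideal : [pchar F] =i pred0 -> (2 <= n)%N -> forall u, (P (0, u)).1 = 0.
Proof.
move=> pchar0F n_ge2 u; have P00 := aut_zero.
case: autP => [[inLP _] _ surjP bracketP].
have slu : inL ((0, u) : 'M[F]_n * 'rV[F]_m) by exact: sl0.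
apply: sl_comm_delta_eq0 => //; first exact: inLP.
move=> i j ij; have [z slz Pz] := surjP (delta_mx i j, 0) (sl_delta F ij).
have := bracketP z (0, u) slz slu.
rewrite {1}/lbracket /= mulmx0 mul0mx subrr rho0 // mulmx0 P00 Pz.
by move=> /(congr1 fst) /= /eqP; rewrite eq_sym subr_eq0 => /eqP.
Qed.

(* Apply [P] to [[x, x]] and [[[x, x], x]] for [x = (g, v)]. *)
Lemma aut_opp_kernels g v w : sl g -> P (g, v) = (- g, w) ->
  (v *m rho g = 0 -> w *m rho g = 0) /\
  (forall c, v *m (rho g *m rho g + c *: rho g) = 0 ->
     w *m (rho g *m rho g - c *: rho g) = 0).
Proof.
move=> slg Px; have P00 := aut_zero.
case: autP => [[_ linP] _ _ bracketP].
have rhoNg : rho (- g) = - rho g by exact: rhoN.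
have slx : inL (g, v) by [].
have sl1 : inL ((0, v *m rho g) : 'M[F]_n * 'rV[F]_m) by exact: sl0.
have sl2 : inL ((0, v *m rho g *m rho g) : 'M[F]_n * 'rV[F]_m) by exact: sl0.
have P1 : P (0, v *m rho g) = (0, - (w *m rho g)).
  by have := bracketP _ _ slx slx; rewrite /lbracket /= subrr Px /= subrr rhoNg mulmxN.
have P2 : P (0, v *m rho g *m rho g) = (0, w *m rho g *m rho g).
  have := bracketP _ _ sl1 slx; rewrite /lbracket /= mulmx0 mul0mx subrr P1 Px /=.
  by rewrite mulmx0 mul0mx subrr rhoNg mulNmx mulmxN opprK.
split=> [vg0 | c vgc0].
  by move: P1; rewrite vg0 P00 => -[/esym/eqP]; rewrite oppr_eq0 => /eqP.
have := linP c _ _ sl1 sl2; rewrite P1 P2 /L_add /L_scale /= scaler0 addr0.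
have -> : c *: (v *m rho g) + v *m rho g *m rho g = v *m (rho g *m rho g + c *: rho g).
  by rewrite mulmxDr mulmxA scalemxAr addrC.
rewrite vgc0 P00 => -[/esym <-].
by rewrite mulmxBr mulmxA -scalemxAr scalerN addrC.
Qed.

End Automorphism.

Section LocalAutomorphism.
Variables (F : fieldType) (n m : nat) (rho : 'M[F]_n -> 'M[F]_m).
Variable D : 'M[F]_n * 'rV[F]_m -> 'M[F]_n * 'rV[F]_m.
Hypotheses (pchar0F : [pchar F] =i pred0) (n_ge2 : (2 <= n)%N).
Hypotheses (rho_mod : right_sl_module rho) (locD : local_automorphism rho D).
Hypothesis Dsl : forall g, sl g -> (D (g, 0)).1 = - g.

(* Automorphisms preserve [I], so [D] acts on [I] by an injective matrix [M]. *)
Lemma local_aut_opp_shape : exists M : 'M[F]_m,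
  (forall v : 'rV_m, v *m M = 0 -> v = 0) /\
  forall g v, sl g -> exists2 P, L_automorphism rho P &
    P (g, v) = (- g, (D (g, 0)).2 + v *m M).
Proof.
case: locD => -[_ linD] locDx.
pose f v := (D (0, v)).2.
have f_lin a u v : f (a *: u + v) = a *: f u + f v.
  rewrite /f; have := linD a (0, u) (0, v) (sl0 _ _) (sl0 _ _).
  by rewrite /L_add /L_scale /= scaler0 addr0 => ->.
have D0 v : D (0, v) = (0, v *m lin1_mx f).
  have [P [autP Pv]] := locDx (0, v) (sl0 _ _).
  by rewrite [D _]surjective_pairing -Pv (aut_ideal rho_mod autP) // Pv linear_row_map_mx.
exists (lin1_mx f); split=> [v v0 | g v slg].
  have [P [autP Pv]] := locDx (0, v) (sl0 _ _).
  case: (autP) => _ injP _ _.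
  have : P (0, v) = P (0, 0) by rewrite Pv D0 v0 (aut_zero autP).
  by move/injP => /(_ (sl0 _ _) (sl0 _ _)) [].
have [P [autP Pgv]] := locDx (g, v) slg; exists P => //.
have := linD 1 (g, 0) (0, v) slg (sl0 _ _).
rewrite /L_add /L_scale /= !scale1r addr0 add0r => Dgv.
by rewrite Pgv Dgv Dsl // D0 addr0.
Qed.

Lemma local_aut_opp_weight_reversing : exists M : 'M[F]_m,
  [/\ forall v : 'rV_m, v *m M = 0 -> v = 0,
      forall g, sl g -> kernel_stable M (rho g) &
      forall g, sl g -> weight_reversing M (rho g)].
Proof.
have [M [Minj DM]] := local_aut_opp_shape; exists M.
have Dg0 g : sl g -> (D (g, 0)).2 *m rho g = 0 /\
    forall c, (D (g, 0)).2 *m (rho g *m rho g - c *: rho g) = 0.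
  move=> slg; have [P autP] := DM g 0 slg; rewrite mul0mx addr0 => Pg.
  have [ker rev] := aut_opp_kernels rho_mod autP slg Pg.
  by split=> [|c]; [exact: ker (mul0mx _ _) | exact: rev c (mul0mx _ _)].
split=> // g slg v.
  move=> vg0; have [P autP /(aut_opp_kernels rho_mod autP slg)[/(_ vg0)]] := DM g v slg.
  by rewrite mulmxDl (Dg0 g slg).1 add0r.
move=> c vgc0.
have [P autP /(aut_opp_kernels rho_mod autP slg)[_ /(_ c vgc0)]] := DM g v slg.
by rewrite mulmxDl (Dg0 g slg).2 add0r.
Qed.

End LocalAutomorphism.

Theorem lemma3p5 (F : closedFieldType) (hF : [pchar F] =i pred0)
    (n m : nat) (hn : (2 <= n)%N) (rho : 'M[F]_n -> 'M[F]_m)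
    (hmod : right_sl_module rho) (hirr : irreducible_module rho)
    (hnt : nontrivial_action rho)
    (D : 'M[F]_n * 'rV[F]_m -> 'M[F]_n * 'rV[F]_m)
    (hD : L_linear D)
    (hDsl : forall g : 'M[F]_n, sl g -> (D (g, 0)).1 = - g) :
  ~ local_automorphism rho D.
Proof.
move=> locD.
have [M [Minj Mker Mrev]] := local_aut_opp_weight_reversing hF hn hmod locD hDsl.
have [i [j [ij Xnz]]] := exists_delta_nonzero hmod hn hnt.
have ji : j != i by rewrite eq_sym.
apply: (sl2_no_weight_reversing_operator hF (sl2_triple_delta hmod ij) Xnz Minj).
- exact/Mker/sl_delta.
- exact/Mker/sl_delta.
- exact/Mker/sl_delta_diag.
- exact/Mrev/sl_delta_diag.
Qed.
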